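(* Let $F:\mathcal{P}(V,A)\to S_2(A)$ be a non-Marian, reducible, weakly viable consular election rule satisfying SPP and SPO. Let $R\subseteq S_2(A)$ be the range of $F$ and $D=\{\alpha(L)|_R : L \text{ a linear order on } A\}$. Then $D$ is not a linked domain over $R$.
   Context: $V$ is a finite nonempty set of voters, $A$ a finite set of alternatives; a profile $P$ assigns to each voter $i$ a linear order $P_i$ on $A$; $P_i'P_{-i}$ replaces voter $i$'s order by $P_i'$; $P|_B$ is the profile of restrictions to $B\subseteq A$. $S_2(A)$ is the set of 2-element subsets of $A$; a consular election rule is a map $F:\mathcal{P}(V,A)\to S_2(A)$. SPO: for all $P$, $i$, $P_i'$, $\mathrm{best}(P_i,F(P))\succeq_i\mathrm{best}(P_i,F(P_i'P_{-i}))$; SPP: same with $\mathrm{worst}$, where $\mathrm{best}(P_i,W)$, $\mathrm{worst}(P_i,W)$ are the $P_i$-best and $P_i$-worst elements of $W$. Weakly viable: every $a\in A$ lies in $F(P)$ for some $P$. Marian: some $m\in A$ lies in $F(P)$ for every $P$. Reducible: there is a partition $A=B\uplus C$ and social choice functions $G:\mathcal{P}(V,B)\to B$, $H:\mathcal{P}(V,C)\to C$ with $F(P)=\{G(P|_B),H(P|_C)\}$ for all $P$. For a linear order $L$ on $A$, $\alpha(L)$ is the linear order on $S_2(A)$ with $X$ above $Y$ iff $\mathrm{best}(L,X)$ is above $\mathrm{best}(L,Y)$ in $L$, or they are equal and $\mathrm{worst}(L,X)$ is above $\mathrm{worst}(L,Y)$; $\alpha(L)|_R$ is its restriction to $R$.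 In a domain $D$ of linear orders over $R$, $x,y\in R$ are connected if some order in $D$ ranks $x$ first and $y$ second and some order in $D$ ranks $y$ first and $x$ second; $D$ is linked if $R$ can be enumerated $x_1,\dots,x_q$ with $x_1$ connected to $x_2$ and each $x_j$ ($j\ge3$) connected to at least two of $x_1,\dots,x_{j-1}$. *)

From mathcomp Require Import all_boot.
Set Implicit Arguments. Unset Strict Implicit. Unset Printing Implicit Defensive.

(* A (strict) linear order on T: [lo_rel L x y] means "x is ranked above y". *)
Record linord (T : eqType) := LinOrd {
  lo_rel :> rel T;
  lo_irr : irreflexive lo_rel;
  lo_trans : transitive lo_rel;
  lo_total : forall x y, x != y -> lo_rel x y || lo_rel y x }.

Definition profile (V : finType) (T : eqType) := V -> linord T.

Definition upd (V : finType) (T : eqType) (P : profile V T) (i : V) (L : linord T)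
  : profile V T := fun j => if j == i then L else P j.

Definition subB (A : finType) (B : {set A}) := {x : A | x \in B}.

Section Restr.
Variables (A : finType) (B : {set A}) (L : linord A).
Definition restr_rel : rel (subB B) := fun x y => L (val x) (val y).
Lemma restr_irr : irreflexive restr_rel.
Proof. by move=> x; exact: lo_irr. Qed.
Lemma restr_trans : transitive restr_rel.
Proof. by move=> y x z; exact: lo_trans. Qed.
Lemma restr_total x y : x != y -> restr_rel x y || restr_rel y x.
Proof. by move=> nxy; apply: lo_total; rewrite val_eqE. Qed.
Definition restr_lo : linord (subB B) := LinOrd restr_irr restr_trans restr_total.
End Restr.

Definition restr_prof (V A : finType) (P : profile V A) (B : {set A})
  : profile V (subB B) := fun i => restr_lo B (P i).

Definition pair2 (A : finType) := {X : {set A} | #|X| == 2}.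

Definition is_best (A : finType) (L : linord A) (W : {set A}) (x : A) : Prop :=
  x \in W /\ forall y, y \in W -> y != x -> L x y.
Definition is_worst (A : finType) (L : linord A) (W : {set A}) (x : A) : Prop :=
  x \in W /\ forall y, y \in W -> y != x -> L y x.

Definition weakly_above (A : finType) (L : linord A) (x y : A) : Prop :=
  x = y \/ L x y.

Section Rules.
Variables (V A : finType).
Implicit Type F : profile V A -> pair2 A.

Definition SPO F : Prop :=
  forall (P : profile V A) (i : V) (Li' : linord A) (b b' : A),
    is_best (P i) (val (F P)) b ->
    is_best (P i) (val (F (upd P i Li'))) b' ->
    weakly_above (P i) b b'.

Definition SPP F : Prop :=
  forall (P : profile V A) (i : V) (Li' : linord A) (w w' : A),
    is_worst (P i) (val (F P)) w ->
    is_worst (P i) (val (F (upd P i Li'))) w' ->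
    weakly_above (P i) w w'.

Definition weakly_viable F : Prop :=
  forall a : A, exists P, a \in val (F P).

Definition marian F : Prop :=
  exists m : A, forall P, m \in val (F P).

Definition reducible F : Prop :=
  exists (B C : {set A}),
    [/\ B :&: C = set0, B :|: C = setT &
    exists (G : profile V (subB B) -> subB B) (H : profile V (subB C) -> subB C),
      forall P, val (F P) = [set val (G (restr_prof P B)); val (H (restr_prof P C))]].

Definition range_of F : pair2 A -> Prop := fun X => exists P, F P = X.
End Rules.

Definition alpha (A : finType) (L : linord A) (X Y : pair2 A) : Prop :=
  exists bX bY, is_best L (val X) bX /\ is_best L (val Y) bY /\
    (L bX bY \/
     (bX = bY /\ exists wX wY, is_worst L (val X) wX /\ is_worst L (val Y) wY /\ L wX wY)).

(* Domains of linear orders over R (R a subset of T); an order over R is given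
   by a relation on T of which only the part on R matters. *)
Definition ranks_first_second (T : eqType) (R : T -> Prop) (r : T -> T -> Prop) (x y : T)
  : Prop :=
  [/\ R x, R y, x <> y,
      (forall z, R z -> z <> x -> r x z) &
      (forall z, R z -> z <> x -> z <> y -> r y z)].

Definition connected (T : eqType) (R : T -> Prop) (D : (T -> T -> Prop) -> Prop) (x y : T)
  : Prop :=
  (exists r, D r /\ ranks_first_second R r x y) /\
  (exists r, D r /\ ranks_first_second R r y x).

(* R can be enumerated x_1..x_q with x_1 connected to x_2 and each x_j (j >= 3)
   connected to at least two of x_1..x_{j-1} (indices shifted to start at 0). *)
Definition linked (T : eqType) (R : T -> Prop) (D : (T -> T -> Prop) -> Prop) : Prop :=
  exists (s : seq T) (x0 : T),
    [/\ uniq s, (forall x, x \in s <-> R x), 2 <= size s,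
        connected R D (nth x0 s 0) (nth x0 s 1) &
        forall j, 2 <= j < size s ->
          exists i1 i2, [/\ i1 < j, i2 < j, i1 != i2,
                         connected R D (nth x0 s j) (nth x0 s i1) &
                         connected R D (nth x0 s j) (nth x0 s i2)]].

Definition alpha_domain (A : finType) (R : pair2 A -> Prop)
  : (pair2 A -> pair2 A -> Prop) -> Prop :=
  fun r => exists L : linord A, forall X Y, R X -> R Y -> (r X Y <-> alpha L X Y).

(* A reducible rule elects one alternative of B and one of its complement C,
   chosen independently, so its range consists of pairs straddling B and is
   closed under exchanging the C-element of one pair for that of another.
   In the domain of the orders alpha(L) restricted to such a range, two pairs
   can only be connected if they intersect: if X is alpha(L)-first and Y is
   second with X, Y disjoint, the pair Z formed by best(L,X) and the element
   of Y on the other side of B lies strictly below Y, yet its best element is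
   at least best(L,X), which is above best(L,Y).  Along a linked enumeration,
   a common element a of the first two pairs then propagates: if X_j misses a
   but meets two earlier pairs {a,e1}, {a,e2}, then e1 and e2 lie on the same
   side of B in X_j, so e1 = e2 and the two earlier pairs coincide.  Hence a
   belongs to every elected pair and F is Marian. *)
From mathcomp Require Import all_boot.
From Stdlib Require Import ProofIrrelevance FunctionalExtensionality.

Set Implicit Arguments. Unset Strict Implicit. Unset Printing Implicit Defensive.

Section Orders.
Variables (A : finType) (L : linord A).

Lemma linord_eq (L' : linord A) : L =2 L' -> L = L'.
Proof.
case: L L' => [r ir tr tot] [r' ir' tr' tot'] /= eqr.
have rr' : r = r' by apply: functional_extensionality => x;
  apply: functional_extensionality; exact: eqr.
by subst r'; congr LinOrd; apply: proof_irrelevance.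
Qed.

Lemma weakly_above_trans y x z :
  weakly_above L x y -> weakly_above L y z -> weakly_above L x z.
Proof.
move=> [-> //|Lxy] [<-|Lyz]; right=> //; exact: lo_trans Lxy Lyz.
Qed.

Lemma weakly_above_asym x y : weakly_above L x y -> ~ L y x.
Proof.
move=> [->|Lxy] Lyx; first by move: Lyx; rewrite lo_irr.
by have := lo_trans Lxy Lyx; rewrite lo_irr.
Qed.

Lemma is_best_weakly_above W b x : is_best L W b -> x \in W -> weakly_above L b x.
Proof.
by move=> [_ bW] xW; case: (eqVneq x b) => [->|]; [left|right; exact: bW].
Qed.

Lemma is_best_uniq W b b' : is_best L W b -> is_best L W b' -> b = b'.
Proof.
move=> bestb bestb'; case: (is_best_weakly_above bestb bestb'.1) => // Lbb'.
by case: (weakly_above_asym (is_best_weakly_above bestb' bestb.1)).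
Qed.

Lemma alpha_best_weakly_above (X Y : pair2 A) bX bY :
  alpha L X Y -> is_best L (val X) bX -> is_best L (val Y) bY ->
  weakly_above L bX bY.
Proof.
move=> [bX' [bY' [bestX' [bestY' XY]]]] bestX bestY.
rewrite -(is_best_uniq bestX' bestX) -(is_best_uniq bestY' bestY).
by case: XY => [|[-> _]]; [right|left].
Qed.

End Orders.

Lemma pair2_eq_set2 (A : finType) (X : pair2 A) a e :
  a \in val X -> e \in val X -> a != e -> val X = [set a; e].
Proof.
move=> aX eX ae; apply/esym/eqP.
rewrite eqEcard cards2 ae (eqP (valP X)) andbT.
by apply/subsetP => x; rewrite in_set2 => /orP[]/eqP->.
Qed.

Section Straddle.
Variables (A : finType) (B : {set A}).

Definition straddles (X : pair2 A) : Prop :=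
  exists g h, [/\ val X = [set g; h], g \in B & h \notin B].

Lemma straddles_eq X u v : straddles X -> u \in val X -> v \in val X ->
  (u == v) = ((u \in B) == (v \in B)).
Proof.
move=> [g [h [-> gB hB]]]; have gh : g != h by apply: contraNneq hB => <-.
rewrite !in_set2 => /orP[]/eqP-> /orP[]/eqP->; rewrite ?eqxx //.
  by rewrite (negbTE gh) gB (negbTE hB).
by rewrite eq_sym (negbTE gh) gB (negbTE hB).
Qed.

Lemma straddles_other X b : straddles X -> exists2 w, w \in val X & (w \in B) != b.
Proof.
move=> [g [h [-> gB hB]]].
case: b; [exists h | exists g]; rewrite ?in_set2 ?eqxx ?orbT //.
- by rewrite (negbTE hB).
- by rewrite gB.
Qed.

Lemma straddles_common X Y Z a :
  straddles X -> straddles Y -> straddles Z ->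
  a \in val X -> a \in val Y -> a \notin val Z ->
  (exists2 e, e \in val Z & e \in val X) -> (exists2 e, e \in val Z & e \in val Y) ->
  X = Y.
Proof.
move=> sX sY sZ aX aY aZ [e1 e1Z e1X] [e2 e2Z e2Y].
have ae1 : a != e1 by apply: contraNneq aZ => ->.
have ae2 : a != e2 by apply: contraNneq aZ => ->.
have e12 : e1 = e2.
  apply/eqP; rewrite (straddles_eq sZ e1Z e2Z).
  move: ae1 ae2; rewrite (straddles_eq sX aX e1X) (straddles_eq sY aY e2Y).
  by case: (a \in B); case: (e1 \in B); case: (e2 \in B).
by apply: val_inj; rewrite (pair2_eq_set2 aX e1X ae1) (pair2_eq_set2 aY e2Y ae2) e12.
Qed.

End Straddle.

Section Glue.
Variables (A : finType) (B : {set A}) (L1 L2 : linord A).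

Definition glue_rel : rel A := fun u v =>
  if u \in B then (v \notin B) || L1 u v else (v \notin B) && L2 u v.

Lemma glue_irr : irreflexive glue_rel.
Proof. by move=> x; rewrite /glue_rel; case: ifP => ->; rewrite lo_irr. Qed.

Lemma glue_trans : transitive glue_rel.
Proof.
move=> y x z; rewrite /glue_rel.
by case: (x \in B); case: (y \in B); case: (z \in B) => //=; apply: lo_trans.
Qed.

Lemma glue_total x y : x != y -> glue_rel x y || glue_rel y x.
Proof.
move=> xy; rewrite /glue_rel.
by case: (x \in B); case: (y \in B) => //=; apply: lo_total.
Qed.

Definition glue : linord A := LinOrd glue_irr glue_trans glue_total.

End Glue.

Section GlueProfile.
Variables (V A : finType) (B : {set A}) (P1 P2 : profile V A).

Definition glue_prof : profile V A := fun i => glue B (P1 i) (P2 i).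

Lemma restr_glue_prof_in : restr_prof glue_prof B = restr_prof P1 B.
Proof.
apply: functional_extensionality => i; apply: linord_eq => x y.
by rewrite /= /restr_rel /= /glue_rel (valP x) (valP y).
Qed.

Lemma restr_glue_prof_out (C : {set A}) :
  [disjoint B & C] -> restr_prof glue_prof C = restr_prof P2 C.
Proof.
move=> BC; apply: functional_extensionality => i; apply: linord_eq => x y.
by rewrite /= /restr_rel /= /glue_rel !(disjointFl BC (valP _)).
Qed.

End GlueProfile.

Section MixedRange.
Variables (A : finType) (B : {set A}) (R : pair2 A -> Prop).
Hypothesis R_straddles : forall X, R X -> straddles B X.
Hypothesis R_mix : forall X Y g h, R X -> R Y ->
  g \in val X -> g \in B -> h \in val Y -> h \notin B ->
  exists2 Z, R Z & val Z = [set g; h].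

Lemma mix_across X Y x w : R X -> R Y -> x \in val X -> w \in val Y ->
  (x \in B) != (w \in B) -> exists2 Z, R Z & val Z = [set x; w].
Proof.
move=> RX RY xX wY; case xB: (x \in B); case wB: (w \in B) => // _.
  exact: R_mix RX RY xX xB wY (negbT wB).
by have [Z RZ defZ] := R_mix RY RX wY wB xX (negbT xB); exists Z; rewrite // setUC.
Qed.

Lemma alpha_first_second_meet r X Y :
  alpha_domain R r -> ranks_first_second R r X Y ->
  exists2 a, a \in val X & a \in val Y.
Proof.
move=> [L rL] [RX RY neXY X_first Y_second].
have [a /andP[aX aY]|disjXY] := pickP [pred a | (a \in val X) && (a \in val Y)].
  by exists a.
have notXY a : a \in val X -> a \notin val Y.
  by move=> aX; move: (disjXY a) => /= /negbT; rewrite aX.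
exfalso.
have alphaXY := (rL X Y RX RY).1 (X_first Y RY (nesym neXY)).
have [bX [bY [bestX [bestY _]]]] := alphaXY.
have [ebXY|LbXY] := alpha_best_weakly_above alphaXY bestX bestY.
  by have := notXY bX bestX.1; rewrite ebXY bestY.1.
have [w wY wB] := straddles_other (bX \in B) (R_straddles RY).
have [Z RZ defZ] : exists2 Z, R Z & val Z = [set bX; w].
  by apply: mix_across RX RY bestX.1 wY _; rewrite eq_sym.
have bXZ : bX \in val Z by rewrite defZ set21.
have neZX : Z <> X.
  by move=> eZX; have := notXY w; rewrite -eZX defZ set22 wY => /(_ isT).
have neZY : Z <> Y by move=> eZY; have := notXY bX bestX.1; rewrite -eZY bXZ.
have alphaYZ := (rL Y Z RY RZ).1 (Y_second Z RZ neZX neZY).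
have [_ [bZ [_ [bestZ _]]]] := alphaYZ.
apply: weakly_above_asym LbXY.
exact: weakly_above_trans (alpha_best_weakly_above alphaYZ bestY bestZ)
                          (is_best_weakly_above bestZ bXZ).
Qed.

End MixedRange.

Definition linked_enum (T : Type) (c : T -> T -> Prop) (s : seq T) (x0 : T) : Prop :=
  c (nth x0 s 0) (nth x0 s 1) /\
  forall j, 2 <= j < size s ->
    exists i1 i2, [/\ i1 < j, i2 < j, i1 != i2,
                   c (nth x0 s j) (nth x0 s i1) & c (nth x0 s j) (nth x0 s i2)].

Lemma linked_enum_sub (T : Type) (c c' : T -> T -> Prop) s x0 :
  (forall x y, c x y -> c' x y) -> linked_enum c s x0 -> linked_enum c' s x0.
Proof.
move=> cc' [c01 cj]; split=> [|j /cj [i1 [i2 [lt1 lt2 ne12 c1 c2]]]]; first exact: cc'.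
by exists i1, i2; split; auto.
Qed.

Lemma straddles_linked_enum_common (A : finType) (B : {set A})
    (s : seq (pair2 A)) (x0 : pair2 A) :
  uniq s -> {in s, forall X : pair2 A, straddles B X} ->
  linked_enum (fun X Y : pair2 A => exists2 a, a \in val X & a \in val Y) s x0 ->
  exists a, {in s, forall X : pair2 A, a \in val X}.
Proof.
move=> uniq_s s_straddle [[a a0 a1] meet_j]; exists a.
suff a_nth j : j < size s -> a \in val (nth x0 s j).
  by move=> X Xs; rewrite -(nth_index x0 Xs) a_nth ?index_mem.
elim/ltn_ind: j => -[_ _|[_ _|j IH js]] //.
have [i1 [i2 [lt1 lt2 ne12 m1 m2]]] := meet_j j.+2 js.
have [lt1s lt2s] := (ltn_trans lt1 js, ltn_trans lt2 js).
apply/contraT => aj; rewrite -(negbTE ne12) -(nth_uniq x0 lt1s lt2s uniq_s).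
apply/eqP.
by apply: (straddles_common _ _ _ (IH _ lt1 lt1s) (IH _ lt2 lt2s) aj m1 m2);
  apply: s_straddle; rewrite mem_nth.
Qed.

Section ReducibleRange.
Variables (V A : finType) (F : profile V A -> pair2 A) (B C : {set A}).
Variables (G : profile V (subB B) -> subB B) (H : profile V (subB C) -> subB C).
Hypothesis BC : [disjoint B & C].
Hypothesis defF :
  forall P, val (F P) = [set val (G (restr_prof P B)); val (H (restr_prof P C))].

Lemma reducible_range_straddles X : range_of F X -> straddles B X.
Proof.
move=> [P <-]; exists (val (G (restr_prof P B))), (val (H (restr_prof P C))).
by split; [exact: defF | exact: valP | rewrite (disjointFl BC (valP _))].
Qed.

Lemma reducible_range_mix X Y g h : range_of F X -> range_of F Y ->
  g \in val X -> g \in B -> h \in val Y -> h \notin B ->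
  exists2 Z, range_of F Z & val Z = [set g; h].
Proof.
move=> [P1 eX] [P2 eY] gX gB hY hB.
have RX : range_of F X by exists P1.
have RY : range_of F Y by exists P2.
have -> : g = val (G (restr_prof P1 B)).
  apply/eqP; rewrite (straddles_eq (reducible_range_straddles RX) gX).
    by rewrite gB (valP (G _)).
  by rewrite -eX defF set21.
have -> : h = val (H (restr_prof P2 C)).
  apply/eqP; rewrite (straddles_eq (reducible_range_straddles RY) hY).
    by rewrite (negbTE hB) (disjointFl BC (valP _)).
  by rewrite -eY defF set22.
exists (F (glue_prof B P1 P2)); first by exists (glue_prof B P1 P2).
by rewrite defF restr_glue_prof_in restr_glue_prof_out.
Qed.

End ReducibleRange.

Theorem proposition55 (V A : finType) (hV : 0 < #|V|)
  (F : profile V A -> pair2 A) :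
  ~ marian F -> reducible F -> weakly_viable F -> SPP F -> SPO F ->
  ~ linked (range_of F) (alpha_domain (range_of F)).
Proof.
move=> not_marian [B [C [BC0 _ [G [H defF]]]]] _ _ _ [s [x0 [uniq_s mem_s _ c01 cj]]].
have BC : [disjoint B & C] by rewrite -setI_eq0 BC0.
have R_straddles := reducible_range_straddles BC defF.
have R_mix := reducible_range_mix BC defF.
have connected_meet X Y : connected (range_of F) (alpha_domain (range_of F)) X Y ->
    exists2 a, a \in val X & a \in val Y.
  move=> [[r [Dr rXY]] _].
  exact: (alpha_first_second_meet R_straddles R_mix Dr rXY).
have [a a_s] := straddles_linked_enum_common uniq_s
  (fun X Xs => R_straddles X ((mem_s X).1 Xs))
  (linked_enum_sub connected_meet (conj c01 cj)).
by apply: not_marian; exists a => P; apply/a_s/mem_s; exists P.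
Qed.
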